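(* For every $n\in\mathbb N$, \[ \mathsf{HLS}_n\bigl(1,(X_C)_C\bigr)=\sum_{\varnothing\neq C_1\subsetneq C_2\subsetneq\dots\subsetneq C_\ell\subseteq[n]}\ \prod_{i=1}^\ell\frac{X_{C_i}}{1-X_{C_i}}, \] the sum including the empty chain ($\ell=0$, contributing $1$). In particular, setting all $X_C=X$, \[ \mathsf{HLS}_n(1,X)=\frac{E_n(X)}{(1-X)^n},\qquad E_n(X)=\sum_{w\in S_n}X^{\#\{i\in[n-1]:\,w(i+1)<w(i)\}}. \]
   Context: Hall–Littlewood–Schubert series: Let $[n]=\{1,\dots,n\}$. $\mathrm{SSYT}_n$ is the set of semistandard Young tableaux with entries in $[n]$ (including the empty one); a tableau is identified with its sequence of columns $(C_1,\dots,C_\ell)$, $C_j\subseteq[n]$ the set of entries of column $j$, and $T_{ij}$ is the entry in row $i$, column $j$. $T$ is reduced if its columns are pairwise distinct; $\mathrm{rSSYT}_n$ is the finite set of reduced tableaux. For cells $(i,j),(i,j+1)$ both in $T$, $\mathrm{Leg}^+_T(i,j)=C_j\cap\{T_{ij},\dots,T_{i,j+1}\}$ if $T_{i,j+1}\notin C_j$, else $\varnothing$ ($\varnothing$ if a cell is missing). $\Phi_T(Y)=\prod_{\mathrm{Leg}^+_T(i,j)\neq\varnothing}(1-Y^{\#\mathrm{Leg}^+_T(i,j)})$. For variables $\mathbf X=(X_C)_{\varnothing\ne C\subseteq[n]}$, $\mathsf{HLS}_n(Y,\mathbf X)=\sum_{T\in\mathrm{rSSYT}_n}\Phi_T(Y)\prod_{C\in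 T}\frac{X_C}{1-X_C}$; $\mathsf{HLS}_n(Y,(f_C)_C)$ denotes the substitution $X_C\mapsto f_C$. $S_n$ is the symmetric group on $[n]$. *)

From HB Require Import structures.
From mathcomp Require Import all_boot all_order all_algebra all_fingroup.
Set Implicit Arguments. Unset Strict Implicit. Unset Printing Implicit Defensive.
Import Order.TTheory GRing.Theory.
Local Open Scope ring_scope.

(* A tableau with entries in [n] (encoded as 'I_n, i.e. 0..n-1, order
   preserved) is given by its sequence of columns C_1,...,C_l (0-indexed). *)
Section HLS.
Variable n : nat.
Implicit Types (s : seq {set 'I_n}) (C : {set 'I_n}).

Definition col s (j : nat) : {set 'I_n} := nth set0 s j.

Definition entry s (i j : nat) : nat :=
  nth 0%N (sort leq [seq val x | x <- enum (col s j)]) i.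

Definition cell s (i j : nat) : bool := (j < size s)%N && (i < #|col s j|)%N.

(* semistandard Young tableau: nonempty columns (strict increase down a column
   is automatic for sets), weakly decreasing column lengths, weakly increasing
   rows *)
Definition is_SSYT s : bool :=
  all (fun C => C != set0) s &&
  all (fun j => (#|col s j.+1| <= #|col s j|)%N &&
                all (fun i => (entry s i j <= entry s i j.+1)%N)
                    (iota 0 #|col s j.+1|))
      (iota 0 (size s).-1).

Definition is_rSSYT s : bool := is_SSYT s && uniq s.

Definition leg s (i j : nat) : {set 'I_n} :=
  if cell s i j && cell s i j.+1 &&
     ~~ [exists x in col s j, val x == entry s i j.+1]
  then [set x in col s j | (entry s i j <= val x <= entry s i j.+1)%N]
  else set0.

Definition Phi {K : fieldType} s (Y : K) : K :=
  \prod_(j < size s) \prod_(i < n)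
     (if leg s i j != set0 then 1 - Y ^+ #|leg s i j| else 1).

(* HLS_n(Y, X): a reduced tableau has at most 2^n - 1 (distinct, nonempty)
   columns, so summing over tuples of length k < 2^n covers rSSYT_n. *)
Definition HLS {K : fieldType} (Y : K) (X : {set 'I_n} -> K) : K :=
  \sum_(k < 2 ^ n)
    \sum_(t : k.-tuple {set 'I_n} | is_rSSYT t)
      Phi t Y * \prod_(C <- t) (X C / (1 - X C)).

(* chains  emptyset <> C_1 < C_2 < ... < C_l  subseteq [n], represented by
   their underlying set of subsets *)
Definition is_chain (S : {set {set 'I_n}}) : bool :=
  (set0 \notin S) &&
  [forall A in S, forall B in S, (A \subset B) || (B \subset A)].

Definition des (w : 'S_n) : nat :=
  #|[set i : 'I_n | [exists j : 'I_n, (val j == (val i).+1) && (w j < w i)%N]]|.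

Definition Eulerian {K : fieldType} (x : K) : K :=
  \sum_(w : 'S_n) x ^+ des w.

End HLS.

From Pilot Require Import Defs.
From mathcomp Require Import all_boot all_order all_algebra all_fingroup.
From mathcomp Require Import zify ring.
Import GRing.Theory.
Set Implicit Arguments. Unset Strict Implicit. Unset Printing Implicit Defensive.

(* At Y = 1 every factor 1 - Y^k of Phi_T vanishes, so HLS_n(1, X) only counts
   the reduced tableaux without nonempty legs.  These are exactly the tableaux
   whose columns are nested, i.e. the strictly decreasing chains of nonempty
   sets, and every chain is listed by exactly one of them.

   For X_C = x, a chain C_1 < ... < C_l is encoded by the permutation w listing
   C_1, then C_2 :\: C_1, ..., then the complement of C_l, each block in
   increasing order, together with the set A of the block ends.  This is a
   bijection onto the pairs (w, A) with Des w contained in A, so with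
   y = x / (1 - x) the sum is
     sum_w sum_(A >= Des w) y^|A| = sum_w y^des(w) (1 + y)^(n - des(w))
                                  = sum_w x^des(w) / (1 - x)^n. *)

Lemma card_set_ord_le n (C : {set 'I_n}) : (#|C| <= n)%N.
Proof. by rewrite -[n in (_ <= n)%N]card_ord max_card. Qed.

Lemma card_ord_lt n m : #|[set j : 'I_n | (j < m)%N]| = minn m n.
Proof.
have le_mn : (minn m n <= n)%N by apply: geq_minr.
have -> : [set j : 'I_n | (j < m)%N] = [set widen_ord le_mn i | i : 'I_(minn m n)].
  apply/setP => j; rewrite inE; apply/idP/imsetP.
    move=> jm; have jmn : (j < minn m n)%N by rewrite leq_min jm ltn_ord.
    by exists (Ordinal jmn) => //; apply: val_inj.
  by case=> i _ ->; move: (ltn_ord i); rewrite /= leq_min => /andP[].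
by rewrite card_imset ?card_ord //; move=> a b /(congr1 val) /= /val_inj.
Qed.

(* If nth s i > nth t i, the first i.+1 entries of t are i.+1 entries of s that
   are at most nth t i, yet all such entries of s are among its first i. *)
Lemma sorted_subset_nth_leq (s t : seq nat) i :
  sorted leq s -> sorted leq t -> uniq s -> uniq t -> {subset t <= s} ->
  (i < size t)%N -> (nth 0 s i <= nth 0 t i)%N.
Proof.
move=> ss st us ut ts it.
have size_ts : (size t <= size s)%N by apply: uniq_leq_size.
set d := nth 0 t i; rewrite leqNgt; apply/negP => dlt.
have low_gt : (i.+1 <= size [seq v <- s | (v <= d)%N])%N.
  rewrite -[i.+1](size_takel it); apply: uniq_leq_size; first exact: take_uniq.
  move=> v vt; have vt' := mem_take vt; rewrite in_take // in vt.
  rewrite mem_filter (ts _ vt') andbT -(nth_index 0 vt') /d.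
  by apply: (sorted_leq_nth leq_trans leqnn 0 st); rewrite ?inE ?index_mem.
have low_le : (size [seq v <- s | (v <= d)%N] <= i)%N.
  rewrite -[i](@size_takel _ _ s); last exact: ltnW (leq_trans it size_ts).
  apply: uniq_leq_size; first exact: filter_uniq.
  move=> v; rewrite mem_filter => /andP[vd vs]; rewrite in_take // ltnNge.
  apply/negP => iv; have := sorted_leq_nth leq_trans leqnn 0 ss.
  move=> /(_ i (index v s)); rewrite !inE index_mem vs (leq_trans it size_ts).
  by move=> /(_ isT isT iv); rewrite nth_index //; lia.
lia.
Qed.

Lemma sum_tuples_pred1 (T : finType) (R : nmodType) N (P : pred (seq T))
    (F : seq T -> R) s0 :
  (size s0 < N)%N -> (forall s, P s = (s == s0)) ->
  (\sum_(k < N) \sum_(t : k.-tuple T | P t) F t = F s0)%R.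
Proof.
move=> s0N Ps; rewrite (bigD1 (Ordinal s0N)) //= [X in (_ + X)%R]big1 ?addr0.
  by rewrite (big_pred1 (in_tuple s0)) // => t; rewrite Ps.
move=> k /eqP kN; apply: big_pred0 => t; rewrite Ps; apply/negP => /eqP ts0.
by apply: kN; apply: val_inj; rewrite /= -ts0 size_tuple.
Qed.

Section Tableaux.
Variable n : nat.
Implicit Types (s : seq {set 'I_n}) (C D : {set 'I_n}).

Definition col_elts C := sort leq [seq val x | x <- enum C].
Definition col_entry C i := nth 0 (col_elts C) i.

Lemma entryE s i j : entry s i j = col_entry (Defs.col s j) i.
Proof. by []. Qed.

Lemma size_col_elts C : size (col_elts C) = #|C|.
Proof. by rewrite size_sort size_map cardE. Qed.

Lemma mem_col_elts C v : (v \in col_elts C) = [exists x in C, val x == v].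
Proof.
rewrite mem_sort; apply/mapP/exists_inP.
  by case=> x; rewrite mem_enum => Cx ->; exists x.
by case=> x Cx /eqP <-; exists x; rewrite ?mem_enum.
Qed.

Lemma col_entry_mem C i : (i < #|C|)%N -> exists2 x, x \in C & val x = col_entry C i.
Proof.
rewrite -size_col_elts => /(mem_nth 0); rewrite mem_col_elts => /exists_inP[x Cx /eqP].
by exists x.
Qed.

Lemma col_entry_index C x : x \in C -> exists2 i, (i < #|C|)%N & col_entry C i = val x.
Proof.
move=> Cx; have xC : val x \in col_elts C by rewrite mem_col_elts; apply/exists_inP; exists x.
exists (index (val x) (col_elts C)); first by rewrite -size_col_elts index_mem.
by rewrite /col_entry nth_index.
Qed.

Lemma col_entry_subset C D i : D \subset C -> (i < #|D|)%N -> (col_entry C i <= col_entry D i)%N.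
Proof.
move=> DC iD; apply: sorted_subset_nth_leq; rewrite ?size_col_elts //.
- exact: sort_sorted leq_total _.
- exact: sort_sorted leq_total _.
- by rewrite sort_uniq (map_inj_uniq val_inj) enum_uniq.
- by rewrite sort_uniq (map_inj_uniq val_inj) enum_uniq.
move=> v; rewrite !mem_col_elts => /exists_inP[x Dx xv]; apply/exists_inP.
by exists x => //; apply: (subsetP DC).
Qed.

Definition cols_nested s := forall j, (j.+1 < size s)%N -> Defs.col s j.+1 \subset Defs.col s j.

Definition decr_chain s :=
  all (fun C => C != set0) s && sorted (fun A B : {set 'I_n} => B \proper A) s.

Lemma SSYT_card_col s j : is_SSYT s -> (j.+1 < size s)%N ->
  (#|Defs.col s j.+1| <= #|Defs.col s j|)%N.
Proof.
case/andP => _ /allP /(_ j); rewrite mem_iota add0n => h js.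
by case/andP: (h ltac:(lia)).
Qed.

Lemma SSYT_row_leq s j i : is_SSYT s -> (j.+1 < size s)%N -> (i < #|Defs.col s j.+1|)%N ->
  (entry s i j <= entry s i j.+1)%N.
Proof.
case/andP => _ /allP /(_ j); rewrite mem_iota add0n => h js ij.
by case/andP: (h ltac:(lia)) => _ /allP; apply; rewrite mem_iota; lia.
Qed.

Lemma nested_SSYT s : all (fun C => C != set0) s -> cols_nested s -> is_SSYT s.
Proof.
move=> s_ne nested; apply/andP; split => //; apply/allP => j; rewrite mem_iota add0n => js.
have js' : (j.+1 < size s)%N by lia.
apply/andP; split; first exact/subset_leq_card/nested.
apply/allP => i; rewrite mem_iota add0n => ij; rewrite !entryE.
exact/col_entry_subset/ij/nested.
Qed.

Lemma nested_leg0 s : cols_nested s -> forall i j, leg s i j = set0.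
Proof.
move=> nested i j; rewrite /leg; case: ifP => // /andP[/andP[_ /andP[js ij]] notin].
have [x xC xv] := col_entry_mem ij; case/negP: notin; apply/exists_inP; exists x.
  exact: (subsetP (nested _ js)).
by rewrite xv.
Qed.

(* If T_{i,j+1} is not in C_j, the leg at (i,j) contains T_{ij} (rows weakly
   increase), so it is nonempty. *)
Lemma leg0_nested s : is_SSYT s ->
  (forall (j : 'I_(size s)) (i : 'I_n), leg s i j == set0) -> cols_nested s.
Proof.
move=> ssyt leg0 j js; apply/subsetP => x xC.
have [i ij ix] := col_entry_index xC.
have ij' := leq_trans ij (SSYT_card_col ssyt js).
have jlt : (j < size s)%N by lia.
have ilt : (i < n)%N by have := card_set_ord_le (Defs.col s j.+1); lia.
have := leg0 (Ordinal jlt) (Ordinal ilt); rewrite /leg /cell /= jlt js ij ij' /=.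
case: ifP => [_ | /negbFE /exists_inP[y yC /eqP yx] _]; last first.
  by move: yC; have -> : y = x by apply: val_inj; rewrite /= yx entryE ix.
have [y yC yv] := col_entry_mem ij'.
move/eqP/setP/(_ y); rewrite !inE yC /= {1}entryE -yv leqnn /= yv -entryE.
by rewrite (SSYT_row_leq ssyt js ij).
Qed.

Lemma proper_rev_trans : transitive (fun A B : {set 'I_n} => B \proper A).
Proof. by move=> B A C AB BC; apply: proper_trans BC AB. Qed.

Lemma proper_rev_irr : irreflexive (fun A B : {set 'I_n} => B \proper A).
Proof. by move=> A; rewrite properxx. Qed.

Lemma decr_chain_uniq s : decr_chain s -> uniq s.
Proof. by case/andP => _; apply: (sorted_uniq proper_rev_trans proper_rev_irr). Qed.

Lemma rSSYT_leg0E s :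
  (is_rSSYT s && [forall j : 'I_(size s), forall i : 'I_n, leg s i j == set0]) =
  decr_chain s.
Proof.
apply/idP/idP.
  case/andP => /andP[ssyt s_uniq] /forallP leg0.
  have nested : cols_nested s.
    by apply: leg0_nested => // j i; apply: (forallP (leg0 j) i).
  apply/andP; split; first by case/andP: ssyt.
  apply/(sortedP set0) => j js; rewrite properEneq nested // andbT.
  by rewrite /Defs.col nth_uniq ?(gtn_eqF (ltnSn j)) ?(ltnW js).
move=> chain; case/andP: (chain) => s_ne s_sorted.
have nested : cols_nested s.
  by move=> j js; apply: proper_sub; move/(sortedP set0): s_sorted; apply.
rewrite /is_rSSYT nested_SSYT ?decr_chain_uniq //=.
by apply/forallP => j; apply/forallP => i; rewrite nested_leg0.
Qed.

Lemma Phi1E (K : fieldType) s : Phi s (1 : K) =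
  (if [forall j : 'I_(size s), forall i : 'I_n, leg s i j == set0] then 1 else 0)%R.
Proof.
rewrite /Phi; case: ifP => [leg0 | /negbT /forallPn[j /forallPn[i ij]]].
  by apply: big1 => j _; apply: big1 => i _; rewrite (eqP (forallP (forallP leg0 j) i)) eqxx.
by rewrite (bigD1 j) //= (bigD1 i) //= ij expr1n subrr !mul0r.
Qed.

End Tableaux.

Section ChainSeq.
Variable n : nat.
Implicit Types (s : seq {set 'I_n}) (S : {set {set 'I_n}}).

Lemma is_chainP S : is_chain S -> {in S &, forall A B : {set 'I_n}, (A \subset B) || (B \subset A)}.
Proof. by case/andP => _ /forall_inP chainS A B SA SB; apply: (forall_inP (chainS A SA)). Qed.

Lemma chain_set0 S : is_chain S -> set0 \notin S.
Proof. by case/andP. Qed.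

Lemma card_chain_lt S : is_chain S -> (#|S| < 2 ^ n)%N.
Proof.
move=> chainS; have : S \proper [set: {set 'I_n}].
  by apply/properP; split; [apply: subsetT | exists set0; rewrite ?(negbTE (chain_set0 chainS))].
by move/proper_card; rewrite -powersetT card_powerset cardsT card_ord.
Qed.

Definition chain_seq S := sort (fun A B : {set 'I_n} => B \subset A) (enum S).

Lemma mem_chain_seq S : [set:: chain_seq S] = S.
Proof. by apply/setP => C; rewrite inE mem_sort mem_enum. Qed.

Lemma decr_chain_seq S : is_chain S -> decr_chain (chain_seq S).
Proof.
move=> chainS; apply/andP; split.
  apply/allP => C; rewrite mem_sort mem_enum => SC.
  by apply: contraNneq (chain_set0 chainS) => <-.
have superset_trans : transitive (fun A B : {set 'I_n} => B \subset A).
  by move=> B A C AB BC; apply: subset_trans BC AB.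
have : sorted (fun A B : {set 'I_n} => B \subset A) (chain_seq S).
  apply: (sort_sorted_in (P := mem S)); last by apply/allP => C; rewrite mem_enum.
  by move=> A B SA SB /=; rewrite orbC (is_chainP chainS).
have : uniq (chain_seq S) by rewrite sort_uniq enum_uniq.
rewrite uniq_pairwise (sorted_pairwise superset_trans) => us ss.
have pw : pairwise [rel A B : {set 'I_n} | (B \subset A) && (A != B)] (chain_seq S).
  by rewrite pairwise_relI ss us.
apply/pairwise_sorted/(sub_pairwise _ pw) => A B /andP[BA AB].
by rewrite properEneq BA eq_sym AB.
Qed.

Lemma decr_chain_seq_eq S s : is_chain S -> decr_chain s -> [set:: s] = S -> s = chain_seq S.
Proof.
move=> chainS /andP[_ ss] sS; have /andP[_ ss0] := decr_chain_seq chainS.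
apply: (irr_sorted_eq (@proper_rev_trans n) (@proper_rev_irr n)) => // C.
by rewrite -[C \in s](in_set (mem s)) -[C \in chain_seq S]in_set mem_chain_seq sS.
Qed.

Lemma decr_chain_is_chain s : decr_chain s -> is_chain [set:: s].
Proof.
case/andP => s_ne ss; apply/andP; split.
  by rewrite inE; apply: contraL s_ne => s0; apply/allPn; exists set0; rewrite ?eqxx.
apply/forall_inP => A; rewrite inE => sA; apply/forall_inP => B; rewrite inE => sB.
have nth_proper := sorted_ltn_nth (@proper_rev_trans n) set0 ss.
rewrite -(nth_index set0 sA) -(nth_index set0 sB).
have iA : index A s \in [pred i | (i < size s)%N] by rewrite inE index_mem.
have iB : index B s \in [pred i | (i < size s)%N] by rewrite inE index_mem.
case: (ltngtP (index A s) (index B s)) => [AB | BA | ->]; last by rewrite subxx.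
- by rewrite orbC proper_sub // nth_proper.
- by rewrite proper_sub // nth_proper.
Qed.

Lemma HLS1_chains (K : fieldType) (X : {set 'I_n} -> K) :
  HLS 1 X = (\sum_(S : {set {set 'I_n}} | is_chain S) \prod_(C in S) (X C / (1 - X C)))%R.
Proof.
set h := fun C : {set 'I_n} => (X C / (1 - X C))%R.
have only_chains (k : 'I_(2 ^ n)) :
  (\sum_(t : k.-tuple {set 'I_n} | is_rSSYT t) Phi t 1 * \prod_(C <- t) h C =
   \sum_(t : k.-tuple {set 'I_n} | decr_chain t) \prod_(C <- t) h C)%R.
  rewrite big_mkcond [RHS]big_mkcond; apply: eq_bigr => t _.
  rewrite Phi1E -rSSYT_leg0E.
  by case: (is_rSSYT t); case: [forall _, _]; rewrite /= ?mul1r ?mul0r.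
rewrite /HLS (eq_bigr _ (fun k _ => only_chains k)); symmetry.
(* Group the decreasing tuples by the chain they list: S is listed by chain_seq S only. *)
transitivity (\sum_(S : {set {set 'I_n}} | is_chain S) \sum_(k < 2 ^ n)
    \sum_(t : k.-tuple {set 'I_n} | decr_chain t && ([set:: t] == S)) \prod_(C <- t) h C)%R.
  apply: eq_bigr => S chainS.
  rewrite (@sum_tuples_pred1 _ _ _ (fun s => decr_chain s && ([set:: s] == S))
    (fun s => \prod_(C <- s) h C)%R (chain_seq S)).
  - rewrite big_uniq ?decr_chain_uniq ?decr_chain_seq //.
    by apply: eq_bigl => C; rewrite -[in LHS](mem_chain_seq S) inE.
  - by rewrite size_sort -cardE card_chain_lt.
  move=> s; apply/andP/eqP => [[cs /eqP sS] | ->]; first exact: decr_chain_seq_eq.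
  by rewrite decr_chain_seq // mem_chain_seq.
rewrite exchange_big; apply: eq_bigr => k _.
rewrite (exchange_big_dep (fun t : k.-tuple _ => decr_chain t)) /=; last by move=> S t _ /andP[].
apply: eq_bigr => t ct; rewrite (big_pred1 [set:: t]) // => S /=.
rewrite ct /=; apply/andP/eqP => [[_ /eqP <-] // | ->].
by split; [exact: decr_chain_is_chain | ].
Qed.

End ChainSeq.

Section ChainCode.
Variable n : nat.
Implicit Types (S : {set {set 'I_n}}) (w : 'S_n) (p : 'S_n * {set 'I_n}).

Definition Des w : {set 'I_n} :=
  [set i : 'I_n | [exists j : 'I_n, (val j == (val i).+1) && (w j < w i)%N]].

Lemma lt_perm_succ w (i j : 'I_n) : i \notin Des w -> val j = (val i).+1 -> (w i < w j)%N.
Proof.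
rewrite inE => /existsPn /(_ j); rewrite negb_and => noD ji.
move: noD; rewrite ji eqxx /= -leqNgt leq_eqVlt => /orP[/eqP /val_inj /perm_inj ij | //].
by move: ji; rewrite ij; lia.
Qed.

Lemma lt_perm_no_descent w (a b : 'I_n) :
  (forall i : 'I_n, (a <= i < b)%N -> i \notin Des w) -> (a < b)%N -> (w a < w b)%N.
Proof.
move=> noD ab.
suff run m (am : (a + m.+1 < n)%N) : (a + m.+1 <= b)%N -> (w a < w (Ordinal am))%N.
  have bm : (a + (b - a - 1).+1 < n)%N by have := ltn_ord b; lia.
  have -> : b = Ordinal bm by apply: val_inj => /=; lia.
  by apply: run => /=; lia.
elim: m am => [|m IHm] am amb.
  by apply: lt_perm_succ; rewrite /= ?addn1 //; apply: noD; lia.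
have am' : (a + m.+1 < n)%N by lia.
apply: (ltn_trans (IHm am' _)); first lia.
by apply: lt_perm_succ; rewrite /= ?addnS //; apply: noD => /=; lia.
Qed.

Definition prefix w (k : nat) : {set 'I_n} := w @: [set j : 'I_n | (j <= k)%N].

Lemma mem_prefix w k x : (x \in prefix w k) = (((w^-1)%g x : nat) <= k).
Proof. by rewrite -{1}(permKV w x) mem_imset ?inE //; apply: perm_inj. Qed.

Lemma card_prefix w (k : 'I_n) : #|prefix w k| = k.+1.
Proof. by rewrite card_imset ?(@card_ord_lt n k.+1); [apply/minn_idPl | apply: perm_inj]. Qed.

Lemma prefix_subset w (k k' : nat) : (k <= k')%N -> prefix w k \subset prefix w k'.
Proof. by move=> kk'; apply/subsetP => x; rewrite !mem_prefix => /leq_trans; apply. Qed.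

Definition chain_of p : {set {set 'I_n}} := [set prefix p.1 k | k : 'I_n in p.2].

Lemma chain_of_is_chain p : is_chain (chain_of p).
Proof.
apply/andP; split.
  apply/negP; rewrite /chain_of => /imsetP[k _ prefix0].
  have : p.1 k \in prefix p.1 k by rewrite mem_prefix permK.
  by rewrite -prefix0 inE.
apply/forall_inP => _ /imsetP[k _ ->]; apply/forall_inP => _ /imsetP[k' _ ->].
by case: (leqP k k') => kk'; [rewrite prefix_subset | rewrite orbC prefix_subset // ltnW].
Qed.

Lemma card_chain_of p : #|chain_of p| = #|p.2|.
Proof.
apply: card_in_imset => k k' _ _ /(congr1 (fun C : {set 'I_n} => #|C|)).
by rewrite /= !card_prefix => -[] /val_inj.
Qed.

(* The block of e in the code of S is its depth, the number of members of S
   avoiding e; key S sorts by block, then by value.  Positions are 0-based, so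
   the block ends are recorded as the indices |C| - 1. *)
Definition depth S e := #|[set C in S | e \notin C]|.
Definition key S (e : 'I_n) := depth S e * n + e.
Definition rank S e := #|[set e' | (key S e' < key S e)%N]|.

Lemma key_lt_depth S a b : (depth S a < depth S b)%N -> (key S a < key S b)%N.
Proof. by rewrite /key => ab; have := ltn_ord a; nia. Qed.

Lemma key_lt_eq_depth S a b : depth S a = depth S b -> (key S a < key S b)%N = (a < b)%N.
Proof. by rewrite /key => ->; lia. Qed.

Lemma key_inj S : injective (key S).
Proof.
move=> a b /(congr1 (modn^~ n)); rewrite !modnMDl !modn_small //.
exact: val_inj.
Qed.

Lemma rank_lt S e : (rank S e < n)%N.
Proof.
rewrite -[n in (_ < n)%N]card_ord; apply/proper_card/properP.
by split; [apply/subsetP | exists e; rewrite ?inE ?ltnn].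
Qed.

Lemma ltn_rank S a b : (rank S a < rank S b)%N = (key S a < key S b)%N.
Proof.
have mono a' b' : (key S a' < key S b')%N -> (rank S a' < rank S b')%N.
  move=> ab; apply/proper_card/properP; split; last by exists a'; rewrite !inE ?ltnn.
  by apply/subsetP => z; rewrite !inE => /ltn_trans; apply.
case: (ltngtP (key S a) (key S b)) => [/mono // | /mono /ltnW | /key_inj ->].
- by rewrite leqNgt => /negbTE.
- by rewrite ltnn.
Qed.

Definition rank_ord S e : 'I_n := Ordinal (rank_lt S e).

Lemma rank_ord_inj S : injective (rank_ord S).
Proof.
move=> a b /(congr1 val) /= ab; apply: (@key_inj S).
by case: (ltngtP (key S a) (key S b)) => //; rewrite -ltn_rank ab ltnn.
Qed.

Definition chain_perm S : 'S_n := ((perm (@rank_ord_inj S))^-1)%g.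
Definition chain_sizes S : {set 'I_n} := [set k : 'I_n | [exists C in S, #|C| == k.+1]].
Definition chain_code S := (chain_perm S, chain_sizes S).

Lemma rank_chain_perm S j : rank S (chain_perm S j) = j.
Proof. by have := permKV (perm (@rank_ord_inj S)) j; rewrite permE => /(congr1 val). Qed.

Lemma chain_permV S x : (((chain_perm S)^-1)%g x : nat) = rank S x.
Proof. by rewrite invgK permE. Qed.

Lemma depth_lt S C e e' : is_chain S -> C \in S -> e \in C -> e' \notin C ->
  (depth S e < depth S e')%N.
Proof.
move=> chainS SC Ce Ce'; apply/proper_card/properP; split; last first.
  by exists C; rewrite !inE ?Ce ?Ce' ?SC.
apply/subsetP => D; rewrite !inE => /andP[SD De]; rewrite SD /=.
case/orP: (is_chainP chainS SD SC) => [DC | CD].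
  by apply: contraNN Ce'; apply: (subsetP DC).
by case/negP: De; apply: (subsetP CD).
Qed.

Lemma rank_lt_card S C e : is_chain S -> C \in S -> (rank S e < #|C|)%N = (e \in C).
Proof.
move=> chainS SC; case: (boolP (e \in C)) => Ce.
  have lower : [set e' | (key S e' < key S e)%N] \subset C :\ e.
    apply/subsetP => x; rewrite !inE => xe; apply/andP; split.
      by apply: contraTneq xe => ->; rewrite ltnn.
    apply: contraTT xe => Cx; rewrite -leqNgt ltnW //.
    exact/key_lt_depth/(depth_lt chainS SC Ce Cx).
  by have := subset_leq_card lower; rewrite (cardsD1 e C) Ce add1n ltnS.
apply/negbTE; rewrite -leqNgt; apply: subset_leq_card.
apply/subsetP => x Cx; rewrite inE; exact/key_lt_depth/(depth_lt chainS SC Cx Ce).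
Qed.

Lemma chain_card_gt0 S C : is_chain S -> C \in S -> (0 < #|C|)%N.
Proof. by move=> chainS SC; rewrite card_gt0; apply: contraNneq (chain_set0 chainS) => <-. Qed.

Lemma prefix_chain_perm S C : is_chain S -> C \in S -> prefix (chain_perm S) #|C|.-1 = C.
Proof.
move=> chainS SC; apply/setP => x; rewrite mem_prefix chain_permV -(rank_lt_card _ chainS SC).
by have := chain_card_gt0 chainS SC; lia.
Qed.

Lemma chain_of_code S : is_chain S -> chain_of (chain_code S) = S.
Proof.
move=> chainS; apply/setP => C; apply/imsetP/idP.
  case=> k; rewrite inE => /exists_inP[D SD /eqP Dk] ->.
  by rewrite /= -[val k]/(k.+1.-1) -Dk prefix_chain_perm.
move=> SC; have C0 := chain_card_gt0 chainS SC.
have Cn : (#|C|.-1 < n)%N by have := card_set_ord_le C; lia.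
exists (Ordinal Cn); last by rewrite /= prefix_chain_perm.
by rewrite inE; apply/exists_inP; exists C; rewrite //= prednK.
Qed.

(* A descent of the code at i separates i and i.+1 into different blocks, so some
   C in S contains the first i.+1 values of the permutation but not the next one. *)
Lemma Des_chain_code S : is_chain S -> Des (chain_perm S) \subset chain_sizes S.
Proof.
move=> chainS; apply/subsetP => i; rewrite inE => /existsP[j /andP[/eqP ji desc]].
have {}ji : (j : nat) = i.+1 := ji.
set w := chain_perm S in desc *; have ri := rank_chain_perm S i; have rj := rank_chain_perm S j.
have key_ij : (key S (w i) < key S (w j))%N by rewrite -ltn_rank -/w ri rj ji.
have depth_ij : (depth S (w i) < depth S (w j))%N.
  case: (ltngtP (depth S (w i)) (depth S (w j))) => // [/key_lt_depth | /key_lt_eq_depth same].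
    lia.
  by rewrite same in key_ij; lia.
have [D SD /andP[Di Dj]] : exists2 D, D \in S & (w i \in D) && (w j \notin D).
  apply/exists_inP; apply: contraTT depth_ij => /exists_inPn noD; rewrite -leqNgt.
  apply/subset_leq_card/subsetP => D; rewrite !inE => /andP[SD Dj]; rewrite SD /=.
  by apply: contraNN Dj => Di; move: (noD D SD); rewrite Di /= negbK.
rewrite inE; apply/exists_inP; exists D => //; apply/eqP.
have := rank_lt_card (w i) chainS SD; have := rank_lt_card (w j) chainS SD.
rewrite Di (negbTE Dj) -/w ri rj ji; lia.
Qed.

Section CodeOfChainOf.
Variables (w : 'S_n) (A : {set 'I_n}).
Hypothesis DesA : Des w \subset A.
Let S := chain_of (w, A).

Lemma chain_sizes_of : chain_sizes S = A.
Proof.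
apply/setP => k; rewrite inE; apply/exists_inP/idP.
  by case=> _ /imsetP[k' Ak' ->]; rewrite card_prefix => /eqP[/val_inj <-].
by move=> Ak; exists (prefix w k); [apply: imset_f | rewrite card_prefix].
Qed.

Lemma avoid_chain_of_subset (a b : 'I_n) : (a <= b)%N ->
  [set C in S | w a \notin C] \subset [set C in S | w b \notin C].
Proof.
move=> ab; apply/subsetP => C; rewrite !inE => /andP[SC].
by case/imsetP: SC => k Ak ->; rewrite !mem_prefix !permK -!ltnNge imset_f //= => /leq_trans->.
Qed.

Lemma key_chain_of_mono (a b : 'I_n) : (a < b)%N -> (key S (w a) < key S (w b))%N.
Proof.
move=> ab; have sub := avoid_chain_of_subset (ltnW ab).
case: (ltngtP (depth S (w a)) (depth S (w b))) => [/key_lt_depth // | | same].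
  by have := subset_leq_card sub; rewrite /depth; lia.
rewrite (key_lt_eq_depth same); apply: lt_perm_no_descent => // i /andP[ai ib].
apply/negP => /(subsetP DesA) Ai.
have avoid_eq : [set C in S | w a \notin C] = [set C in S | w b \notin C].
  by apply/eqP; rewrite eqEcard sub -!/(depth _ _) same /=.
move/setP/(_ (prefix w i)): avoid_eq.
by rewrite !inE imset_f //= !mem_prefix !permK ai -ltnNge ib.
Qed.

Lemma rank_chain_of j : rank S (w j) = j.
Proof.
rewrite /rank; have -> : [set e' | (key S e' < key S (w j))%N] = w @: [set a : 'I_n | (a < j)%N].
  apply/setP => e; rewrite -(permKV w e) mem_imset ?inE; last exact: perm_inj.
  case: (ltngtP ((w^-1)%g e) j) => [/key_chain_of_mono -> // | | /val_inj ->].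
    by move/key_chain_of_mono/ltnW; rewrite leqNgt => /negbTE.
  by rewrite ltnn.
by rewrite card_imset ?card_ord_lt; [apply/minn_idPl/ltnW | apply: perm_inj].
Qed.

Lemma chain_code_of : chain_code S = (w, A).
Proof.
rewrite /chain_code chain_sizes_of; congr (_, _); apply/permP => j.
have rj : perm (@rank_ord_inj S) (w j) = j by rewrite permE; apply/val_inj/rank_chain_of.
by rewrite /chain_perm -{1}rj permK.
Qed.

End CodeOfChainOf.

Lemma sum_chains_by_code (R : nmodType) (F : nat -> R) :
  (\sum_(S : {set {set 'I_n}} | is_chain S) F #|S| =
   \sum_(p : 'S_n * {set 'I_n} | Des p.1 \subset p.2) F #|p.2|)%R.
Proof.
rewrite [RHS](reindex_onto chain_code chain_of); last by move=> [w A] /chain_code_of.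
apply: eq_big => [S | S chainS]; last by rewrite -card_chain_of chain_of_code.
apply/idP/idP => [chainS | /andP[_ /eqP <-]]; last exact: chain_of_is_chain.
by rewrite Des_chain_code //= chain_of_code.
Qed.

End ChainCode.

Local Open Scope ring_scope.

Lemma sum_supsets_expr (R : comPzSemiRingType) (T : finType) (D : {set T}) (y : R) :
  \sum_(A : {set T} | D \subset A) y ^+ #|A| = y ^+ #|D| * (1 + y) ^+ (#|T| - #|D|).
Proof.
pose f (i : T) (b : bool) : R := if b then y else if i \in D then 0 else 1.
have prod_sum : \prod_(i : T) \sum_(b : bool) f i b = y ^+ #|D| * (1 + y) ^+ (#|T| - #|D|).
  rewrite (bigID (mem D)) /= -(cardC D) addKn -!prodr_const; congr (_ * _).
    by apply: eq_bigr => i Di; rewrite big_bool /f /= Di addr0.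
  by apply: eq_bigr => i Di; rewrite big_bool /f /= (negbTE Di) addrC.
rewrite -prod_sum bigA_distr_bigA /=.
rewrite (reindex (fun A : {set T} => [ffun i => i \in A])) /=; last first.
  by exists (fun phi => [set i | phi i]) => [A _ | phi _]; [apply/setP => i | apply/ffunP => i];
    rewrite !(inE, ffunE).
rewrite [LHS]big_mkcond; apply: eq_bigr => A _.
under eq_bigr do rewrite ffunE.
rewrite (bigID (mem A)) /= [X in X * _](eq_bigr (fun _ => y)) => [|i ->] //.
rewrite prodr_const; case: ifPn => [DA | /subsetPn[i Di Ai]].
  rewrite big1 ?mulr1 // => i Ai; rewrite /f /= (negbTE Ai) ifF //.
  by apply: (contraNF _ Ai); apply: (subsetP DA).
by rewrite (bigD1 i) //= /f (negbTE Ai) Di mul0r mulr0.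
Qed.

Lemma odds_exprE (K : fieldType) (x : K) (d m : nat) : 1 - x != 0 -> (d <= m)%N ->
  (x / (1 - x)) ^+ d * (1 + x / (1 - x)) ^+ (m - d) = x ^+ d / (1 - x) ^+ m.
Proof.
move=> x1 dm; have -> : 1 + x / (1 - x) = (1 - x)^-1 by field.
by rewrite expr_div_n exprVn -mulrA -invfM -exprD subnKC.
Qed.

Lemma HLS1_const (K : fieldType) (n : nat) (x : K) : x != 1 ->
  HLS 1 (fun _ : {set 'I_n} => x) = Eulerian n x / (1 - x) ^+ n.
Proof.
move=> x1; have x1' : 1 - x != 0 by rewrite subr_eq0 eq_sym.
rewrite HLS1_chains; under eq_bigr do rewrite prodr_const.
rewrite (@sum_chains_by_code n _ (fun k => (x / (1 - x)) ^+ k)).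
rewrite -(pair_big_dep predT (fun (w : 'S_n) (A : {set 'I_n}) => Des w \subset A)
  (fun _ A => (x / (1 - x)) ^+ #|A|)) /=.
rewrite /Eulerian mulr_suml; apply: eq_bigr => w _.
by rewrite sum_supsets_expr card_ord odds_exprE ?card_set_ord_le.
Qed.

Theorem mainTheorem17 :
  forall (K : fieldType) (n : nat),
    (forall X : {set 'I_n} -> K,
        (forall C : {set 'I_n}, C != set0 -> X C != 1) ->
        HLS 1 X =
        \sum_(S : {set {set 'I_n}} | is_chain S) \prod_(C in S) (X C / (1 - X C)))
    /\
    (forall x : K, x != 1 ->
        HLS 1 (fun _ : {set 'I_n} => x) = Eulerian n x / (1 - x) ^+ n).
Proof.
by move=> K n; split => [X _ | x]; [apply: HLS1_chains | apply: HLS1_const].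
Qed.
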